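(* Consider the energy-harvesting model described in the context, with parameters $p\in(0,1)$, $\gamma>0$, $B>0$, $w\in\mathbb{N}$. Let $\pi^*(w)$ be an optimal look-ahead policy of the stationary form described in the context, with induced sequence $(\xi_j^* )_{j\ge1}$. Then $\Gamma^*=\mathcal{T}_\infty(\xi_1^*,\xi_2^*,\dots)$.
   Context: Model: a transmitter sends over an AWGN channel with constant gain $\gamma>0$ in discrete time slots $\tau\in\mathbb{N}$; the reward of sending energy $a$ in a slot is $\frac12\log_2(1+\gamma a)$. The transmitter has a battery of capacity $B>0$. Energy arrivals $E_1,E_2,\dots$ are i.i.d. with $\Pr(E_\tau=B)=p$, $\Pr(E_\tau=0)=1-p$, where $0<p<1$. The battery level satisfies $B_1=B$ (the optimal value does not depend on the initial level) and $B_\tau=\min\{B_{\tau-1}-A_{\tau-1}+E_\tau,\,B\}$, where the action $A_\tau$ (energy spent at time $\tau$) must satisfy $0\le A_\tau\le B_\tau$. The transmitter has look-ahead window $w\in\mathbb{N}$: at time $\tau$ it knows $E_1,\dots,E_{\tau+w}$ (and $B_1$), and a (look-ahead) policy $\pi(w)$ is a sequence of (possibly randomized) action functions $A_\tau=\mathcal{A}_\tau((E_t)_{t=1}^{\tau+w},B_1)$. Its $T$-horizon average throughput is $\Gamma_T^{\pi(w)}=\frac1T\mathbb{E}\sum_{\tau=1}^T\frac12\log_2(1+\gamma A_\tau)$, and $\Gamma^*=\sup_{\pi(w)}\liminf_{T\to\infty}\Gamma_T^{\pi(w)}$. An optimal policy exists that is deterministic, Markovian and stationary; for the Bernoulli arrivals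 it can be taken of the following form: let $d_\tau=\min\{t\in\{1,\dots,w\}:E_{\tau+t}=B\}$ if this set is nonempty and $d_\tau=0$ otherwise; then $a_\tau=b_\tau/d_\tau$ if $d_\tau\neq0$, and $a_\tau=\mathcal{A}(b_\tau)$ if $d_\tau=0$, for some fixed function $\mathcal{A}$ with $0\le\mathcal{A}(b)\le b$. The sequence induced by such a policy is $\xi_j^*=\mathcal{A}(b_j)$, where $b_1=B$ and $b_{j+1}=b_j-\xi_j^*$. A nonnegative sequence $(x_j)_{j\ge1}$ is admissible if $\sum_j x_j\le B$. For an admissible sequence, $$\mathcal{T}_\infty(x_1,x_2,\dots)=\sum_{k=1}^{w}p^2(1-p)^{k-1}\frac{k}{2}\log_2\!\Big(1+\gamma\frac{B}{k}\Big)+\sum_{j=1}^{\infty}p(1-p)^{j+w-1}\frac12\log_2(1+\gamma x_j)+\sum_{k=1}^{\infty}p^2(1-p)^{k+w-1}\frac{w}{2}\log_2\!\Big(1+\gamma\frac{B-\sum_{j=1}^{k}x_j}{w}\Big).$$ *)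

From Stdlib Require Import Reals Lra Arith.
From Coquelicot Require Import Coquelicot.
Open Scope R_scope.

Definition log2 (x : R) : R := ln x / ln 2.

Definition rate (g a : R) : R := / 2 * log2 (1 + g * a).

Fixpoint fsum (f : nat -> R) (n : nat) : R :=
  match n with
  | O => 0
  | S m => fsum f m + f (S m)
  end.

(* An arrival realisation is e : nat -> bool, with e t = true iff E_t = B
   (time slots t >= 1; coordinate 0 is unused). *)
Definition energy (B : R) (e : nat -> bool) (t : nat) : R :=
  if e t then B else 0.

Definition upd (e : nat -> bool) (k : nat) (b : bool) : nat -> bool :=
  fun t => if Nat.eqb t k then b else e t.

(* Expectation, under i.i.d. Bernoulli(p) arrivals, of a functional f of the
   arrival sequence that depends only on E_1, ..., E_N: the coordinates
   1..N are integrated out one by one (exact finite expectation). *)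
Fixpoint expect (p : R) (N : nat) (f : (nat -> bool) -> R) : R :=
  match N with
  | O => f (fun _ => false)
  | S n => p * expect p n (fun e => f (upd e (S n) true))
           + (1 - p) * expect p n (fun e => f (upd e (S n) false))
  end.

(* A (deterministic) policy: pol tau e = A_tau, for tau >= 1. *)
Definition policy := nat -> (nat -> bool) -> R.

Fixpoint battery (B : R) (pol : policy) (e : nat -> bool) (tau : nat) : R :=
  match tau with
  | O => B
  | S n => match n with
           | O => B
           | _ => Rmin (battery B pol e n - pol n e + energy B e (S n)) B
           end
  end.

Definition is_policy (B : R) (w : nat) (pol : policy) : Prop :=
  (forall tau e e', (1 <= tau)%nat ->
      (forall t, (1 <= t <= tau + w)%nat -> e t = e' t) ->
      pol tau e = pol tau e')
  /\ (forall tau e, (1 <= tau)%nat ->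
      0 <= pol tau e <= battery B pol e tau).

(* T-horizon average throughput Gamma_T^pi.  The summand depends only on
   E_1..E_{T+w}, so its expectation is the finite expectation over these. *)
Definition throughput (p g : R) (w : nat) (pol : policy) (T : nat) : R :=
  / INR T * expect p (T + w) (fun e => fsum (fun tau => rate g (pol tau e)) T).

Definition Gamma_star (p g B : R) (w : nat) : Rbar :=
  Lub_Rbar (fun x => exists pol, is_policy B w pol /\
     LimInf_seq (fun n => throughput p g w pol (S n)) = Finite x).

(* d_tau = min { t in 1..w : E_{tau+t} = B }, or 0 if empty *)
Fixpoint find_arr (e : nat -> bool) (tau t n : nat) : nat :=
  match n with
  | O => O
  | S n' => if e (tau + t)%nat then t else find_arr e tau (S t) n'
  end.
Definition dist (w : nat) (e : nat -> bool) (tau : nat) : nat :=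
  find_arr e tau 1 w.

Definition stat_action (A : R -> R) (w : nat) (e : nat -> bool) (tau : nat)
  (b : R) : R :=
  match dist w e tau with
  | O => A b
  | d => b / INR d
  end.

Fixpoint stat_battery (B : R) (w : nat) (A : R -> R) (e : nat -> bool)
  (tau : nat) : R :=
  match tau with
  | O => B
  | S n => match n with
           | O => B
           | _ => Rmin (stat_battery B w A e n
                        - stat_action A w e n (stat_battery B w A e n)
                        + energy B e (S n)) B
           end
  end.

Definition stat_policy (B : R) (w : nat) (A : R -> R) : policy :=
  fun tau e => stat_action A w e tau (stat_battery B w A e tau).

Fixpoint xib (B : R) (A : R -> R) (j : nat) : R :=
  match j with
  | O => B
  | S n => match n with
           | O => B
           | _ => xib B A n - A (xib B A n)
           end
  end.
Definition xi (B : R) (A : R -> R) (j : nat) : R := A (xib B A j).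

(* T_infinity(x_1, x_2, ...), x indexed from 1 (x 0 unused) *)
Definition T_inf (p g B : R) (w : nat) (x : nat -> R) : R :=
  fsum (fun k => p ^ 2 * (1 - p) ^ (k - 1) * (INR k / 2)
                 * log2 (1 + g * (B / INR k))) w
  + Series (fun n => p * (1 - p) ^ (S n + w - 1) * (/ 2 * log2 (1 + g * x (S n))))
  + Series (fun n => p ^ 2 * (1 - p) ^ (S n + w - 1) * (INR w / 2)
                 * log2 (1 + g * ((B - fsum x (S n)) / INR w))).

(* Under the stationary policy the action in slot [k + 1] is a fixed function of two independent
   quantities: the age [m] of the last arrival, read off the past, and the distance [d <= w] to
   the next arrival in the window, read off the future.  So the expected reward of that slot is an
   explicit average over [(m, d)].  As [k] grows the law of the age tends to the geometric law
   [p (1 - p) ^ m], hence by Cesaro the average throughput converges to the corresponding limit,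
   which by optimality of the policy is [Gamma^*].  Regrouping that limit according to the gap
   between consecutive arrivals gives the three terms of [T_inf]. *)

From Pilot Require Import Defs.
From Stdlib Require Import Reals Lra Lia.
From Coquelicot Require Import Coquelicot.
Open Scope R_scope.
(* [Reals] exports a metric-space [dist] that would otherwise shadow the one of [Defs]. *)
Notation dist := Defs.dist.

Lemma fsum_S (f : nat -> R) n : fsum f (S n) = fsum f n + f (S n).
Proof. reflexivity. Qed.

Lemma fsum_ext (f h : nat -> R) n :
  (forall k, (1 <= k <= n)%nat -> f k = h k) -> fsum f n = fsum h n.
Proof.
  induction n as [|n IH]; intros H; simpl; [reflexivity|].
  rewrite H by lia. rewrite IH by (intros; apply H; lia). reflexivity.
Qed.

Lemma fsum_plus (f h : nat -> R) n :
  fsum (fun k => f k + h k) n = fsum f n + fsum h n.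
Proof. induction n as [|n IH]; simpl; [ring|]. rewrite IH. ring. Qed.

Lemma fsum_scal c (f : nat -> R) n : fsum (fun k => c * f k) n = c * fsum f n.
Proof. induction n as [|n IH]; simpl; [|rewrite IH]; ring. Qed.

Lemma fsum_const c n : fsum (fun _ => c) n = INR n * c.
Proof. induction n as [|n IH]; simpl fsum; [simpl; ring|]. rewrite IH, S_INR. ring. Qed.

Lemma fsum_sum_f_R0 (f : nat -> R) n : fsum f (S n) = sum_f_R0 (fun k => f (S k)) n.
Proof. induction n as [|n IH]; [simpl; ring|]. simpl fsum in *. rewrite IH. reflexivity. Qed.

Lemma fsum_shift (f : nat -> R) n : fsum f (S n) = f 1%nat + fsum (fun k => f (S k)) n.
Proof. induction n as [|n IH]; [simpl; ring|]. simpl fsum in *. rewrite IH. ring. Qed.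

Lemma is_lim_seq_fsum (u : nat -> nat -> R) (l : nat -> R) n :
  (forall d, (1 <= d <= n)%nat -> is_lim_seq (u d) (l d)) ->
  is_lim_seq (fun k => fsum (fun d => u d k) n) (fsum l n).
Proof.
  induction n as [|n IH]; intros H; simpl.
  - apply is_lim_seq_const.
  - apply is_lim_seq_plus'; [apply IH; intros; apply H|apply H]; lia.
Qed.

Lemma fsum_triangle (G : nat -> R) n :
  fsum (fun d => sum_f_R0 (fun m => G (m + d)%nat) (n - d)) n = fsum (fun j => INR j * G j) n.
Proof.
  induction n as [|n IH]; [reflexivity|]. rewrite !fsum_S.
  rewrite (fsum_ext _ (fun d => sum_f_R0 (fun m => G (m + d)%nat) (n - d) + G (S n))).
  - rewrite fsum_plus, IH, fsum_const, Nat.sub_diag, S_INR. simpl. ring.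
  - intros d Hd. replace (S n - d)%nat with (S (n - d)) by lia. simpl.
    replace (S (n - d + d)) with (S n) by lia. reflexivity.
Qed.

Definition depends_on (P : nat -> Prop) (f : (nat -> bool) -> R) : Prop :=
  forall e e', (forall t, P t -> e t = e' t) -> f e = f e'.

Lemma depends_on_weaken (P Q : nat -> Prop) f :
  (forall t, P t -> Q t) -> depends_on P f -> depends_on Q f.
Proof. intros HPQ Hf e e' H. apply Hf. auto. Qed.

Lemma upd_eq e k b : upd e k b k = b.
Proof. unfold upd. rewrite Nat.eqb_refl. reflexivity. Qed.

Lemma upd_neq e k b t : t <> k -> upd e k b t = e t.
Proof. intros H. unfold upd. apply Nat.eqb_neq in H. rewrite H. reflexivity. Qed.

Lemma depends_on_upd j k b f :
  depends_on (fun t => t <> j) f -> depends_on (fun t => t <> j) (fun e => f (upd e k b)).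
Proof.
  intros Hf e e' H. apply Hf. intros t Ht. unfold upd.
  destruct (Nat.eqb t k); [reflexivity|auto].
Qed.

Section Expectation.
Variable p : R.

Lemma expect_ext N f h : (forall e, f e = h e) -> expect p N f = expect p N h.
Proof.
  revert f h; induction N as [|N IH]; intros f h H; simpl; [apply H|].
  rewrite (IH (fun e => f (upd e (S N) true)) (fun e => h (upd e (S N) true))),
    (IH (fun e => f (upd e (S N) false)) (fun e => h (upd e (S N) false)))
    by (intros; apply H).
  reflexivity.
Qed.

Lemma expect_const N c : expect p N (fun _ => c) = c.
Proof. induction N as [|N IH]; simpl; [|rewrite IH]; ring. Qed.

Lemma expect_plus N f h :
  expect p N (fun e => f e + h e) = expect p N f + expect p N h.
Proof.
  revert f h; induction N as [|N IH]; intros f h; simpl; [reflexivity|].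
  rewrite !IH. ring.
Qed.

Lemma expect_fsum N (f : nat -> (nat -> bool) -> R) n :
  expect p N (fun e => fsum (fun k => f k e) n) = fsum (fun k => expect p N (f k)) n.
Proof.
  induction n as [|n IH]; simpl; [apply expect_const|].
  rewrite expect_plus, IH. reflexivity.
Qed.

Lemma expect_branch N j f1 f0 : (1 <= j <= N)%nat ->
  depends_on (fun t => t <> j) f1 -> depends_on (fun t => t <> j) f0 ->
  expect p N (fun e => if e j then f1 e else f0 e)
  = p * expect p N f1 + (1 - p) * expect p N f0.
Proof.
  revert f1 f0; induction N as [|N IH]; intros f1 f0 Hj H1 H0; [lia|].
  destruct (Nat.eq_dec j (S N)) as [->|Hne].
  - assert (Hflip : forall f e, depends_on (fun t => t <> S N) f ->
      f (upd e (S N) false) = f (upd e (S N) true)).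
    { intros f e Hf. apply Hf. intros t Ht. rewrite !upd_neq by exact Ht. reflexivity. }
    simpl.
    rewrite (expect_ext N (fun e => if upd e (S N) true (S N) then _ else _)
               (fun e => f1 (upd e (S N) true))) by (intros; rewrite upd_eq; reflexivity).
    rewrite (expect_ext N (fun e => if upd e (S N) false (S N) then _ else _)
               (fun e => f0 (upd e (S N) true))) by (intros; rewrite upd_eq; auto).
    rewrite (expect_ext N (fun e => f1 (upd e (S N) false)) (fun e => f1 (upd e (S N) true)))
      by auto.
    rewrite (expect_ext N (fun e => f0 (upd e (S N) false)) (fun e => f0 (upd e (S N) true)))
      by auto.
    ring.
  - assert (Hcommute : forall b, expect p N (fun e => if upd e (S N) b j
                                               then f1 (upd e (S N) b) else f0 (upd e (S N) b))
      = p * expect p N (fun e => f1 (upd e (S N) b))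
        + (1 - p) * expect p N (fun e => f0 (upd e (S N) b))).
    { intros b. rewrite <- IH by (lia || apply depends_on_upd; assumption).
      apply expect_ext. intros e. rewrite upd_neq by exact Hne. reflexivity. }
    simpl. rewrite !Hcommute. ring.
Qed.

End Expectation.

Definition shift_dist (d : nat) : nat :=
  match d with O => O | S d' => S (S d') end.

Lemma find_arr_shift e n : forall tau t, (1 <= t)%nat ->
  find_arr e tau (S t) n = shift_dist (find_arr e (S tau) t n).
Proof.
  induction n as [|n IH]; intros tau t Ht; [reflexivity|]. simpl.
  rewrite <- plus_n_Sm.
  destruct (e (S (tau + t))); [destruct t; [lia|reflexivity]|auto with arith].
Qed.

Lemma dist_S w e tau :
  dist (S w) e tau = if e (S tau) then 1%nat else shift_dist (dist w e (S tau)).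
Proof.
  unfold dist. simpl. rewrite Nat.add_1_r.
  destruct (e (S tau)); [reflexivity|]. apply find_arr_shift. lia.
Qed.

Lemma find_arr_extend e n : forall tau t, (1 <= t)%nat ->
  find_arr e tau t (S n) =
  match find_arr e tau t n with
  | O => if e (tau + (t + n))%nat then (t + n)%nat else O
  | d => d
  end.
Proof.
  induction n as [|n IH]; intros tau t Ht.
  - simpl. rewrite Nat.add_0_r. destruct (e (tau + t)%nat); reflexivity.
  - change (find_arr e tau t (S (S n)))
      with (if e (tau + t)%nat then t else find_arr e tau (S t) (S n)).
    rewrite IH by lia. simpl. rewrite ?Nat.add_succ_r.
    destruct (e (tau + t)%nat); [destruct t; [lia|]|]; reflexivity.
Qed.

Lemma dist_extend w e tau :
  dist (S w) e tau =
  match dist w e tau with O => if e (tau + S w)%nat then S w else O | d => d end.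
Proof. unfold dist. apply find_arr_extend. lia. Qed.

Lemma find_arr_range e n : forall tau t,
  find_arr e tau t n = O \/ (t <= find_arr e tau t n < t + n)%nat.
Proof.
  induction n as [|n IH]; intros tau t; simpl; [left; reflexivity|].
  destruct (e (tau + t)%nat); [right; lia|].
  destruct (IH tau (S t)); [left|right]; lia.
Qed.

Lemma dist_le w e tau : (dist w e tau <= w)%nat.
Proof. unfold dist. destruct (find_arr_range e w tau 1); lia. Qed.

Lemma find_arr_ext e e' n : forall tau t,
  (forall s, (tau + t <= s < tau + t + n)%nat -> e s = e' s) ->
  find_arr e tau t n = find_arr e' tau t n.
Proof.
  induction n as [|n IH]; intros tau t H; simpl; [reflexivity|].
  rewrite H by lia. destruct (e' (tau + t)%nat); [reflexivity|].
  apply IH. intros s Hs. apply H. lia.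
Qed.

Lemma dist_ext w e e' tau :
  (forall s, (tau < s <= tau + w)%nat -> e s = e' s) -> dist w e tau = dist w e' tau.
Proof. intros H. apply find_arr_ext. intros s Hs. apply H. lia. Qed.

Inductive dist_step (w : nat) : nat -> nat -> Prop :=
  | dist_step_approach d : dist_step w (S (S d)) (S d)
  | dist_step_none : dist_step w O O
  | dist_step_enter : dist_step w O w.

Lemma dist_step_no_arrival w e tau :
  e (S tau) = false -> dist_step w (dist w e tau) (dist w e (S tau)).
Proof.
  intros Hno. destruct w as [|v]; [constructor|].
  rewrite dist_S, dist_extend, Hno.
  destruct (dist v e (S tau)); [|constructor].
  destruct (e (S tau + S v)%nat); constructor.
Qed.

(* Slots since the last arrival, seen from slot [S k]; slot 1 counts as an arrival since [B_1 = B]. *)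
Fixpoint age (e : nat -> bool) (k : nat) : nat :=
  match k with
  | O => O
  | S k' => if e (S k) then O else S (age e k')
  end.

Lemma age_ext e e' k : (forall t, (t <= S k)%nat -> e t = e' t) -> age e k = age e' k.
Proof.
  induction k as [|k IH]; intros H; simpl; [reflexivity|].
  rewrite H by lia. rewrite IH by (intros; apply H; lia). reflexivity.
Qed.

Section Means.
Variable p : R.

Definition dist_mean (n : nat) (phi : nat -> R) : R :=
  fsum (fun d => p * (1 - p) ^ (d - 1) * phi d) n + (1 - p) ^ n * phi O.

Lemma dist_mean_S n phi :
  dist_mean (S n) phi = p * phi 1%nat + (1 - p) * dist_mean n (fun d => phi (shift_dist d)).
Proof.
  unfold dist_mean. rewrite fsum_shift.
  rewrite (fsum_ext _ (fun d => (1 - p) * (p * (1 - p) ^ (d - 1) * phi (shift_dist d)))).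
  - rewrite fsum_scal. simpl. ring.
  - intros [|d] Hd; [lia|]. simpl. rewrite Nat.sub_0_r. ring.
Qed.

Lemma dist_mean_ext n phi psi : (forall d, phi d = psi d) ->
  dist_mean n phi = dist_mean n psi.
Proof.
  intros H. unfold dist_mean. rewrite H. f_equal. apply fsum_ext. intros; rewrite H. reflexivity.
Qed.

Lemma is_lim_seq_dist_mean n (phi : nat -> nat -> R) (l : nat -> R) :
  (forall d, (d <= n)%nat -> is_lim_seq (fun k => phi k d) (l d)) ->
  is_lim_seq (fun k => dist_mean n (phi k)) (dist_mean n l).
Proof.
  intros H. unfold dist_mean. apply is_lim_seq_plus'.
  - apply (is_lim_seq_fsum (fun d k => p * (1 - p) ^ (d - 1) * phi k d)).
    intros d Hd. apply (is_lim_seq_scal_l _ _ (l d)). apply H. lia.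
  - apply (is_lim_seq_scal_l _ _ (l O)). apply H. lia.
Qed.

Fixpoint age_mean (k : nat) (phi : nat -> R) : R :=
  match k with
  | O => phi O
  | S k' => p * phi O + (1 - p) * age_mean k' (fun m => phi (S m))
  end.

Lemma expect_age_mean N k phi : (S k <= N)%nat ->
  expect p N (fun e => phi (age e k)) = age_mean k phi.
Proof.
  revert phi; induction k as [|k IH]; intros phi HN; simpl.
  - apply expect_const.
  - rewrite (expect_ext p N _ (fun e => if e (S (S k)) then phi O else phi (S (age e k))))
      by (intros e; destruct (e (S (S k))); reflexivity).
    rewrite expect_branch.
    + rewrite expect_const, (IH (fun m => phi (S m))) by lia. reflexivity.
    + lia.
    + intros e e' _. reflexivity.
    + intros e e' H. rewrite (age_ext e e') by (intros; apply H; lia). reflexivity.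
Qed.

Lemma expect_dist_mean N n : forall tau (G : (nat -> bool) -> nat -> R),
  (tau + n <= N)%nat ->
  (forall d, depends_on (fun t => (t <= tau)%nat) (fun e => G e d)) ->
  expect p N (fun e => G e (dist n e tau))
  = dist_mean n (fun d => expect p N (fun e => G e d)).
Proof.
  induction n as [|n IH]; intros tau G HN HG.
  - unfold dist_mean. simpl. rewrite (expect_ext p N _ (fun e => G e O)) by reflexivity. ring.
  - rewrite dist_mean_S.
    rewrite (expect_ext p N _ (fun e => if e (S tau) then G e 1%nat
                                        else G e (shift_dist (dist n e (S tau)))))
      by (intros e; rewrite dist_S; destruct (e (S tau)); reflexivity).
    rewrite expect_branch.
    + rewrite (IH (S tau) (fun e d => G e (shift_dist d))); [reflexivity|lia|].
      intros d. apply (depends_on_weaken (fun t => t <= tau)%nat); [lia|apply HG].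
    + lia.
    + apply (depends_on_weaken (fun t => t <= tau)%nat); [lia|apply HG].
    + intros e e' H. rewrite (dist_ext n e e') by (intros; apply H; lia).
      apply HG. intros; apply H; lia.
Qed.

End Means.

Section Geometric.
Variable p : R.
Hypothesis Hp : 0 < p < 1.

Definition geom_mean (phi : nat -> R) : R := Series (fun m => p * (1 - p) ^ m * phi m).

Lemma ex_series_geom_weighted phi C : (forall m, Rabs (phi m) <= C) ->
  ex_series (fun m => p * (1 - p) ^ m * phi m).
Proof.
  intros Hphi.
  apply (@ex_series_le R_AbsRing R_CompleteNormedModule _ (fun m => (C * p) * (1 - p) ^ m)).
  - intros m. change norm with Rabs. simpl.
    assert (Hq : 0 <= (1 - p) ^ m) by (apply pow_le; lra).
    rewrite !Rabs_mult, (Rabs_pos_eq p), (Rabs_pos_eq ((1 - p) ^ m)) by lra.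
    replace (C * p * (1 - p) ^ m) with (p * (1 - p) ^ m * C) by ring.
    apply Rmult_le_compat_l; [nra|apply Hphi].
  - apply (@ex_series_scal_l R_AbsRing R_NormedModule).
    apply ex_series_geom. rewrite Rabs_pos_eq; lra.
Qed.

(* Truncating the age at [k] puts the mass [(1 - p) ^ (S k)] of the geometric tail on [m = k]. *)
Lemma age_mean_partial_sum k phi :
  age_mean p k phi = sum_f_R0 (fun m => p * (1 - p) ^ m * phi m) k + (1 - p) ^ (S k) * phi k.
Proof.
  revert phi; induction k as [|k IH]; intros phi; [simpl; ring|].
  simpl age_mean. rewrite IH, (decomp_sum _ (S k)) by lia. simpl Init.Nat.pred.
  rewrite (sum_eq (fun i => p * (1 - p) ^ S i * phi (S i))
                  (fun i => p * (1 - p) ^ i * phi (S i) * (1 - p)))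
    by (intros; simpl; ring).
  rewrite <- scal_sum. simpl. ring.
Qed.

Lemma age_mean_lim phi C : (forall m, Rabs (phi m) <= C) ->
  is_lim_seq (fun k => age_mean p k phi) (geom_mean phi).
Proof.
  intros Hphi.
  apply (is_lim_seq_ext (fun k => sum_n (fun m => p * (1 - p) ^ m * phi m) k
                                  + (1 - p) ^ (S k) * phi k)).
  { intros k. rewrite age_mean_partial_sum, sum_n_Reals. reflexivity. }
  replace (Finite (geom_mean phi)) with (Rbar_plus (geom_mean phi) 0) by (simpl; f_equal; ring).
  apply is_lim_seq_plus'.
  - apply Series_correct. apply (ex_series_geom_weighted _ C Hphi).
  - assert (Hgeom : is_lim_seq (fun k => C * (1 - p) ^ (S k)) 0).
    { replace 0 with (C * 0) by ring. apply (is_lim_seq_scal_l _ C 0).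
      apply -> is_lim_seq_incr_1. apply is_lim_seq_geom. rewrite Rabs_pos_eq; lra. }
    apply (is_lim_seq_le_le (fun k => - (C * (1 - p) ^ (S k))) _ (fun k => C * (1 - p) ^ (S k))).
    + intros k. assert (Hq : 0 <= (1 - p) ^ (S k)) by (apply pow_le; lra).
      specialize (Hphi k). apply Rabs_le_between in Hphi. split; nra.
    + replace (Finite 0) with (Rbar_opp 0) by (simpl; f_equal; ring).
      apply -> is_lim_seq_opp. exact Hgeom.
    + exact Hgeom.
Qed.

End Geometric.

(* Same [match] as in [stat_action], so that the two are convertible. *)
Definition spend (A : R -> R) (d : nat) (b : R) : R :=
  match d with O => A b | S n => b / INR (S n) end.

Lemma xib_fsum B A n : B - fsum (xi B A) (S n) = xib B A (S (S n)).
Proof.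
  induction n as [|n IH]; [unfold xi; simpl; ring|].
  rewrite fsum_S. change (xib B A (S (S (S n)))) with (xib B A (S (S n)) - xi B A (S (S n))).
  rewrite <- IH. ring.
Qed.

Section Battery.
Variables (B : R) (A : R -> R).
Hypothesis HB : 0 <= B.
Hypothesis HA : forall b, 0 <= b <= B -> 0 <= A b <= b.

Lemma xib_bounds j : 0 <= xib B A j <= B.
Proof.
  induction j as [|j IH]; simpl; [lra|].
  destruct j as [|j]; [lra|]. destruct (HA _ IH). lra.
Qed.

Lemma spend_bounds d b : 0 <= b <= B -> 0 <= spend A d b <= b.
Proof.
  intros Hb. destruct d as [|d]; [apply HA, Hb|].
  change (spend A (S d) b) with (b / INR (S d)).
  assert (H1 : 1 <= INR (S d)) by (apply (le_INR 1); lia).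
  split; [apply Rdiv_le_0_compat; lra|].
  apply Rle_div_l; [lra|]. nra.
Qed.

Variable w : nat.
Hypothesis Hw : (1 <= w)%nat.

(* Battery level [m] slots after the last arrival when the next arrival is [d] slots ahead
   ([d = 0]: none within the window).  Before that arrival enters the window the level follows
   [xib]; from then on the remaining energy is spread evenly up to the arrival. *)
Definition level (m d : nat) : R :=
  match d with
  | O => xib B A (S m)
  | _ => if (m + d <=? w)%nat then B * INR d / INR (m + d)
         else xib B A (m + d - w + 1) * INR d / INR w
  end.

Lemma level_bounds m d : (d <= w)%nat -> 0 <= level m d <= B.
Proof.
  intros Hd. destruct d as [|d]; [apply xib_bounds|]. unfold level.
  assert (Hd1 : 1 <= INR (S d)) by (apply (le_INR 1); lia).
  destruct (Nat.leb_spec (m + S d) w) as [Hle|Hgt].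
  - assert (Hmd : INR (S d) <= INR (m + S d)) by (apply le_INR; lia).
    split; [apply Rdiv_le_0_compat; nra|apply Rle_div_l; nra].
  - assert (Hdw : INR (S d) <= INR w) by (apply le_INR; lia).
    pose proof (xib_bounds (m + S d - w + 1)).
    split; [apply Rdiv_le_0_compat; nra|apply Rle_div_l; nra].
Qed.

Lemma level_arrival d : (d <= w)%nat -> level O d = B.
Proof.
  intros Hd. destruct d as [|d]; [reflexivity|]. unfold level. simpl (0 + S d)%nat.
  replace (S d <=? w)%nat with true by (symmetry; apply Nat.leb_le, Hd).
  field. apply Rgt_not_eq, lt_0_INR. lia.
Qed.

Lemma level_step m d d' : dist_step w d d' -> level m d - spend A d (level m d) = level (S m) d'.
Proof.
  intros Hstep. destruct Hstep as [j| |].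
  - unfold level, spend. replace (S m + S j)%nat with (m + S (S j))%nat by lia.
    rewrite !S_INR. pose proof (pos_INR j).
    destruct (m + S (S j) <=? w)%nat.
    + assert (0 < INR (m + S (S j))) by (apply lt_0_INR; lia). field. lra.
    + assert (0 < INR w) by (apply lt_0_INR; lia).
      replace (S m + S j - w + 1)%nat with (m + S (S j) - w + 1)%nat by lia. field. lra.
  - reflexivity.
  - unfold level at 3. destruct w as [|v]; [lia|].
    replace (S m + S v <=? S v)%nat with false by (symmetry; apply Nat.leb_gt; lia).
    replace (S m + S v - S v + 1)%nat with (S (S m)) by lia.
    assert (0 < INR (S v)) by (apply lt_0_INR; lia).
    unfold Rdiv. rewrite Rmult_assoc, Rinv_r, Rmult_1_r by lra. reflexivity.
Qed.

Lemma stat_battery_level e k :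
  stat_battery B w A e (S k) = level (age e k) (dist w e (S k)).
Proof.
  induction k as [|k IH]; [symmetry; apply level_arrival, dist_le|].
  change (stat_battery B w A e (S (S k)))
    with (Rmin (stat_battery B w A e (S k)
                - spend A (dist w e (S k)) (stat_battery B w A e (S k))
                + energy B e (S (S k))) B).
  rewrite IH.
  pose proof (level_bounds (age e k) (dist w e (S k)) (dist_le w e (S k))) as Hlev.
  pose proof (spend_bounds (dist w e (S k)) _ Hlev) as Hspend.
  unfold energy. simpl age. destruct (e (S (S k))) eqn:Harr.
  - rewrite Rmin_right by lra. symmetry. apply level_arrival, dist_le.
  - rewrite Rplus_0_r, Rmin_left by lra.
    apply level_step, dist_step_no_arrival, Harr.
Qed.

End Battery.

Lemma rate_bounds g B a : 0 < g -> 0 <= a <= B -> 0 <= rate g a <= rate g B.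
Proof.
  intros Hg Ha. unfold rate, log2. pose proof ln_lt_2.
  assert (Hga : 0 <= g * a <= g * B) by (split; nra).
  assert (Hln : 0 <= ln (1 + g * a) <= ln (1 + g * B)).
  { rewrite <- ln_1. split; apply ln_le; lra. }
  assert (Hinv : 0 < / ln 2) by (apply Rinv_0_lt_compat; lra).
  unfold Rdiv. split.
  - apply Rmult_le_pos; [lra|apply Rmult_le_pos; lra].
  - apply Rmult_le_compat_l; [lra|apply Rmult_le_compat_r; lra].
Qed.

Section Stationary.
Variables (p g B : R) (w : nat) (A : R -> R).
Hypothesis Hp : 0 < p < 1.
Hypothesis Hg : 0 < g.
Hypothesis HB : 0 <= B.
Hypothesis Hw : (1 <= w)%nat.
Hypothesis HA : forall b, 0 <= b <= B -> 0 <= A b <= b.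

Definition reward (m d : nat) : R := rate g (spend A d (level B A w m d)).

Lemma reward_bounds m d : (d <= w)%nat -> Rabs (reward m d) <= rate g B.
Proof.
  intros Hd. pose proof (level_bounds B A HB HA w Hw m d Hd) as Hlev.
  pose proof (spend_bounds B A HA d _ Hlev) as Hspend.
  destruct (rate_bounds g B (spend A d (level B A w m d)) Hg) as [Hr0 HrB]; [lra|].
  unfold reward. rewrite Rabs_pos_eq; lra.
Qed.

Definition slot_mean (k : nat) : R :=
  dist_mean p w (fun d => age_mean p k (fun m => reward m d)).

Lemma expect_reward N k : (S k + w <= N)%nat ->
  expect p N (fun e => rate g (stat_policy B w A (S k) e)) = slot_mean k.
Proof.
  intros HN.
  rewrite (expect_ext p N _ (fun e => reward (age e k) (dist w e (S k))))
    by (intros e; unfold stat_policy; rewrite (stat_battery_level B A HB HA w Hw); reflexivity).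
  rewrite (expect_dist_mean p N w (S k) (fun e d => reward (age e k) d)).
  - apply dist_mean_ext. intros d. apply (expect_age_mean p N k (fun m => reward m d)). lia.
  - lia.
  - intros d e e' H. rewrite (age_ext e e'); [reflexivity|exact H].
Qed.

Lemma throughput_stat n :
  throughput p g w (stat_policy B w A) (S n) = sum_f_R0 slot_mean n / INR (S n).
Proof.
  unfold throughput. rewrite expect_fsum, fsum_sum_f_R0.
  rewrite (sum_eq _ slot_mean) by (intros k Hk; apply expect_reward; lia).
  unfold Rdiv. apply Rmult_comm.
Qed.

Definition stat_value : R := dist_mean p w (fun d => geom_mean p (fun m => reward m d)).

Lemma is_lim_throughput_stat :
  is_lim_seq (fun n => throughput p g w (stat_policy B w A) (S n)) stat_value.
Proof.
  assert (Hslot : is_lim_seq slot_mean stat_value).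
  { apply is_lim_seq_dist_mean. intros d Hd.
    apply (age_mean_lim p Hp _ (rate g B)). intros m. apply reward_bounds, Hd. }
  apply is_lim_seq_Reals, Cesaro_1, is_lim_seq_Reals, is_lim_seq_incr_1 in Hslot.
  apply (is_lim_seq_ext _ _ _ (fun n => eq_sym (throughput_stat n)) Hslot).
Qed.

(* Regrouping [stat_value] by the gap [j] between consecutive arrivals: a gap [j <= w] contributes
   [gap_term j] in each of its [j] slots, and longer gaps contribute [late_series] in each of their
   last [w] slots, once the arrival is in sight. *)
Definition gap_term (j : nat) : R := p ^ 2 * (1 - p) ^ (j - 1) * rate g (B / INR j).

Definition late_series : R :=
  Series (fun k => p ^ 2 * (1 - p) ^ (w + k) * rate g (xib B A (S (S k)) / INR w)).

Lemma weighted_geom_mean_reward d : (1 <= d <= w)%nat ->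
  p * (1 - p) ^ (d - 1) * geom_mean p (fun m => reward m d)
  = sum_f_R0 (fun m => gap_term (m + d)) (w - d) + late_series.
Proof.
  intros Hd. unfold geom_mean.
  rewrite (Series_incr_n _ (S (w - d))); [|lia|].
  2: { apply (ex_series_geom_weighted p Hp _ (rate g B)). intros m.
       apply reward_bounds. lia. }
  change (Init.Nat.pred (S (w - d))) with (w - d)%nat.
  destruct d as [|d]; [lia|]. simpl (S d - 1)%nat. rewrite Nat.sub_0_r.
  assert (Hd0 : 0 < INR (S d)) by (apply lt_0_INR; lia).
  rewrite Rmult_plus_distr_l. f_equal.
  - rewrite scal_sum. apply sum_eq. intros m Hm.
    unfold gap_term, reward, level, spend.
    replace (m + S d <=? w)%nat with true by (symmetry; apply Nat.leb_le; lia).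
    assert (Hmd : 0 < INR (m + S d)) by (apply lt_0_INR; lia).
    replace (B * INR (S d) / INR (m + S d) / INR (S d)) with (B / INR (m + S d)) by (field; lra).
    replace (m + S d - 1)%nat with (d + m)%nat by lia. rewrite pow_add. ring.
  - unfold late_series. rewrite <- Series_scal_l. apply Series_ext. intros k.
    unfold reward, level, spend.
    replace (S (w - S d) + k + S d <=? w)%nat with false by (symmetry; apply Nat.leb_gt; lia).
    replace (S (w - S d) + k + S d - w + 1)%nat with (S (S k)) by lia.
    assert (Hw0 : 0 < INR w) by (apply lt_0_INR; lia).
    replace (xib B A (S (S k)) * INR (S d) / INR w / INR (S d))
      with (xib B A (S (S k)) / INR w) by (field; lra).
    replace (w + k)%nat with (d + (S (w - S d) + k))%nat by lia. rewrite (pow_add (1 - p) d). ring.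
Qed.

Lemma weighted_geom_mean_reward_none :
  (1 - p) ^ w * geom_mean p (fun m => reward m O)
  = Series (fun n => p * (1 - p) ^ (S n + w - 1) * (/ 2 * log2 (1 + g * xi B A (S n)))).
Proof.
  unfold geom_mean. rewrite <- Series_scal_l. apply Series_ext. intros n.
  unfold reward, level, spend, xi, rate.
  replace (S n + w - 1)%nat with (n + w)%nat by lia. rewrite pow_add. ring.
Qed.

Lemma stat_value_eq : stat_value = T_inf p g B w (xi B A).
Proof.
  unfold stat_value, dist_mean, T_inf.
  rewrite (fsum_ext _ (fun d => sum_f_R0 (fun m => gap_term (m + d)) (w - d) + late_series))
    by (intros; apply weighted_geom_mean_reward; lia).
  rewrite fsum_plus, fsum_triangle, fsum_const, weighted_geom_mean_reward_none.
  rewrite (fsum_ext (fun j => INR j * gap_term j)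
             (fun k => p ^ 2 * (1 - p) ^ (k - 1) * (INR k / 2) * log2 (1 + g * (B / INR k))))
    by (intros; unfold gap_term, rate; field).
  assert (Hlate : INR w * late_series
    = Series (fun n => p ^ 2 * (1 - p) ^ (S n + w - 1) * (INR w / 2)
                       * log2 (1 + g * ((B - fsum (xi B A) (S n)) / INR w)))).
  { unfold late_series. rewrite <- Series_scal_l. apply Series_ext. intros n.
    rewrite xib_fsum. replace (S n + w - 1)%nat with (w + n)%nat by lia. unfold rate. field. }
  rewrite Hlate. ring.
Qed.

End Stationary.

Theorem lemma1 (p g B : R) (w : nat) (A : R -> R) :
  0 < p < 1 -> 0 < g -> 0 < B -> (1 <= w)%nat ->
  (forall b, 0 <= b <= B -> 0 <= A b <= b) ->
  LimInf_seq (fun n => throughput p g w (stat_policy B w A) (S n))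
    = Gamma_star p g B w ->
  Gamma_star p g B w = Finite (T_inf p g B w (xi B A)).
Proof.
  intros Hp Hg HB Hw HA Hopt.
  assert (HB0 : 0 <= B) by lra.
  rewrite <- Hopt, <- (stat_value_eq p g B w A Hp Hg HB0 Hw HA).
  apply is_LimInf_seq_unique, is_lim_LimInf_seq.
  apply (is_lim_throughput_stat p g B w A Hp Hg HB0 Hw HA).
Qed.
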